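(* Let $X$ be a finite abelian group. The quotient of $C(S_X^+)$ by the ideal generated by the relations $u_{ij}=u_{kl}$ for all $i,j,k,l\in X$ with $i-j=k-l$ is equal to $C(X)$; more precisely, this quotient is commutative, equal to $C(Y)$ for a subgroup $Y\subset S_X$ with $u_{ij}(\sigma)=\delta_{i\sigma(j)}$, and $Y$ is the group of translations $j\mapsto j+x$, $x\in X$, of $X$.
   Context: $C(S_X^+)$ is the universal $C^*$-algebra generated by the entries of a magic matrix $u=(u_{ij})_{i,j\in X}$ (entries are orthogonal projections, each row and column summing to $1$), with Hopf structure $\Delta(u_{ij})=\sum_ku_{ik}\otimes u_{kj}$, $\varepsilon(u_{ij})=\delta_{ij}$, $S(u_{ij})=u_{ji}$. Its commutative quotients of the form $C(Y)$, $Y\subset S_X$ a subgroup of the permutation group of $X$, correspond to $u_{ij}(\sigma)=\delta_{i\sigma(j)}$. *)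

From HB Require Import structures.
From mathcomp Require Import all_boot all_order all_algebra all_fingroup.
From mathcomp Require Import complex.
From mathcomp Require Import reals.

Set Implicit Arguments.
Unset Strict Implicit.
Unset Printing Implicit Defensive.

Import Order.TTheory GRing.Theory Num.Theory.
Local Open Scope ring_scope.

Record cstar_alg (R : realType) := CStarAlg {
  cs_car :> algType (complex R);
  cs_star : cs_car -> cs_car;
  cs_norm : cs_car -> R;
  cs_starD : forall a b, cs_star (a + b) = cs_star a + cs_star b;
  cs_starZ : forall (c : complex R) a, cs_star (c *: a) = (conjc c) *: cs_star a;
  cs_starM : forall a b, cs_star (a * b) = cs_star b * cs_star a;
  cs_starK : forall a, cs_star (cs_star a) = a;
  cs_norm_ge0 : forall a, 0 <= cs_norm a;
  cs_norm_eq0 : forall a, cs_norm a = 0 -> a = 0;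
  cs_normD : forall a b, cs_norm (a + b) <= cs_norm a + cs_norm b;
  cs_normZ : forall (c : complex R) a, cs_norm (c *: a) = Normc.normc c * cs_norm a;
  cs_normM : forall a b, cs_norm (a * b) <= cs_norm a * cs_norm b;
  cs_normC : forall a, cs_norm (cs_star a * a) = cs_norm a ^+ 2;
  cs_complete : forall u : nat -> cs_car,
    (forall e : R, 0 < e -> exists N : nat, forall m n : nat,
        (N <= m)%N -> (N <= n)%N -> cs_norm (u m - u n) < e) ->
    exists l : cs_car, forall e : R, 0 < e -> exists N : nat, forall n : nat,
        (N <= n)%N -> cs_norm (u n - l) < e
}.

Definition magic (R : realType) (B : cstar_alg R) (X : finType)
    (u : X -> X -> B) : Prop :=
  (forall i j, cs_star (u i j) = u i j /\ u i j * u i j = u i j) /\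
  (forall i, \sum_(j : X) u i j = 1) /\
  (forall j, \sum_(i : X) u i j = 1).

Definition diff_relations (X : finZmodType) (T : Type) (u : X -> X -> T) : Prop :=
  forall i j k l : X, i - j = k - l -> u i j = u k l.

Definition translations (X : finZmodType) : {set {perm X}} :=
  [set s : {perm X} | [exists x : X, [forall j : X, s j == j + x]]].

(* The points of Y, and C(Y) = functions Y -> C. *)
Definition Ypt (X : finZmodType) := {s : {perm X} | s \in translations X}.

Definition coordC (R : realType) (X : finZmodType) (i j : X)
    : Ypt X -> complex R :=
  fun s => if i == (val s) j then 1 else 0.

Definition magic_CY (R : realType) (X : finZmodType) : Prop :=
  (forall i j (s : Ypt X),
      conjc (coordC R i j s) = coordC R i j s /\
      coordC R i j s * coordC R i j s = coordC R i j s) /\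
  (forall i (s : Ypt X), \sum_(j : X) coordC R i j s = 1) /\
  (forall j (s : Ypt X), \sum_(i : X) coordC R i j s = 1).

Definition star_hom_CY (R : realType) (X : finZmodType) (B : cstar_alg R)
    (phi : (Ypt X -> complex R) -> B) : Prop :=
  [/\ forall f g, phi (fun s => f s + g s) = phi f + phi g,
      forall (c : complex R) f, phi (fun s => c * f s) = c *: phi f,
      forall f g, phi (fun s => f s * g s) = phi f * phi g,
      phi (fun _ => 1) = 1
    & forall f, phi (fun s => conjc (f s)) = cs_star (phi f)].

From mathcomp Require Import all_boot all_order all_algebra all_fingroup.
From mathcomp Require Import cyclic separable cyclotomic.
From mathcomp Require Import complex.
From mathcomp Require Import reals.
From mathcomp Require Import ring lra.
From Stdlib Require Import FunctionalExtensionality.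

Set Implicit Arguments.
Unset Strict Implicit.
Unset Printing Implicit Defensive.

Import Order.TTheory GRing.Theory Num.Theory.
Local Open Scope ring_scope.

(* The translations form a copy of X inside S_X, and the coordinate functions
   u_ij = delta_{i, s j} on it depend only on i - j.  The universal property
   of C(Y) comes from one operator-algebraic fact: projections p_x with
   \sum_x p_x = 1 are pairwise orthogonal.  Granting it, the projections
   u_{x,0} form a partition of unity, and f |-> \sum_x f(x) u_{x,0} is the
   required *-homomorphism (it sends u_ij to u_{i-j,0} = u_ij).

   For the orthogonality, put e = p_x.  The elements e p_z e are "positive"
   and sum to 0 over z <> x.  Positivity is expressed through the norm only:
   || 1 - t e q e || <= 1 for a projection q and t in [0, 1], which follows
   from the block decomposition along e and 1 - e.  Hence c = e p_y e / |X|
   is self-adjoint with || 1 + t c || <= 1 for all t in [-1, 1].  Such a c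
   vanishes: polynomial identities upgrade the bound to || 1 + l c || <= 1
   for every complex l with |l| = 1/2, and averaging (1 + w c / 2)^M against
   w^M over the (M+1)-th roots of unity w isolates (M+1) M c / 2, so that
   M ||c|| <= 2 for every M. *)

Section StarNorm.
Variables (R : realType) (B : cstar_alg R).
Implicit Types a b : B.

Lemma cs_star0 : cs_star (0 : B) = 0.
Proof.
have h : cs_star (0 + 0 : B) = cs_star 0 + cs_star 0 by rewrite cs_starD.
by move: h; rewrite add0r -{1}[cs_star 0]addr0 => /addrI /esym.
Qed.

Lemma cs_starN a : cs_star (- a) = - cs_star a.
Proof. by apply/eqP; rewrite -subr_eq0 opprK -cs_starD addNr cs_star0. Qed.

Lemma cs_starB a b : cs_star (a - b) = cs_star a - cs_star b.
Proof. by rewrite cs_starD cs_starN. Qed.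

Lemma cs_star_sum (I : Type) (r : seq I) (P : pred I) (F : I -> B) :
  cs_star (\sum_(i <- r | P i) F i) = \sum_(i <- r | P i) cs_star (F i).
Proof. exact: (big_morph _ (@cs_starD R B) cs_star0). Qed.

Lemma cs_star1 : cs_star (1 : B) = 1.
Proof.
have h : cs_star (cs_star 1 * 1 : B) = cs_star 1 * cs_star (cs_star 1).
  by rewrite cs_starM.
by move: h; rewrite mulr1 !cs_starK mulr1 => /esym.
Qed.

Lemma cs_starX a n : cs_star a = a -> cs_star (a ^+ n) = a ^+ n.
Proof.
move=> sa; elim: n => [|n IHn]; first by rewrite expr0 cs_star1.
by rewrite exprS cs_starM IHn sa -exprSr exprS.
Qed.

Lemma cs_norm0 : cs_norm (0 : B) = 0.
Proof. by have := cs_normZ 0 (0 : B); rewrite scale0r Normc.normc0 mul0r. Qed.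

Lemma cs_norm_sum (I : Type) (r : seq I) (P : pred I) (F : I -> B) :
  cs_norm (\sum_(i <- r | P i) F i) <= \sum_(i <- r | P i) cs_norm (F i).
Proof.
elim/big_rec2: _ => [|i y1 y2 _ IH]; first by rewrite cs_norm0.
by apply: le_trans (cs_normD _ _) _; rewrite lerD2l.
Qed.

Lemma cs_normZ_real (t : R) a : cs_norm (t%:C%C *: a) = `|t| * cs_norm a.
Proof. by rewrite cs_normZ /Normc.normc /= expr0n /= addr0 sqrtr_sqr. Qed.

Lemma cs_norm_sqr a : cs_star a = a -> cs_norm (a * a) = cs_norm a ^+ 2.
Proof. by move=> sa; rewrite -{1}sa cs_normC. Qed.

Lemma cs_norm_star a : cs_norm (cs_star a) = cs_norm a.
Proof.
suff le_star b : cs_norm b <= cs_norm (cs_star b).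
  by apply: le_anti; rewrite le_star -{2}[a]cs_starK le_star.
have [->|nz] := eqVneq (cs_norm b) 0; first exact: cs_norm_ge0.
have b_gt0 : 0 < cs_norm b by rewrite lt0r nz cs_norm_ge0.
have := cs_normM (cs_star b) b; rewrite cs_normC expr2.
by rewrite ler_pM2r.
Qed.

Lemma cs_norm_proj_le1 a : cs_star a = a -> a * a = a -> cs_norm a <= 1.
Proof.
move=> sa aa; have := cs_norm_sqr sa; rewrite aa expr2 -{1}[cs_norm a]mulr1.
have [->|nz] := eqVneq (cs_norm a) 0; first by [].
by move/(mulfI nz) => <-.
Qed.

Lemma cs_norm1_le1 : cs_norm (1 : B) <= 1.
Proof. by apply: cs_norm_proj_le1; rewrite ?cs_star1 ?mulr1. Qed.

Lemma cs_normM_le1 a b : cs_norm a <= 1 -> cs_norm b <= 1 -> cs_norm (a * b) <= 1.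
Proof.
move=> ha hb; apply: le_trans (cs_normM _ _) _.
by rewrite -[X in _ <= X](mulr1 1) ler_pM // cs_norm_ge0.
Qed.

Lemma cs_normX a n : cs_norm (a ^+ n) <= cs_norm a ^+ n.
Proof.
elim: n => [|n IHn]; first by rewrite !expr0 cs_norm1_le1.
rewrite exprS [X in _ <= X]exprS; apply: le_trans (cs_normM _ _) _.
by rewrite ler_wpM2l // cs_norm_ge0.
Qed.

Lemma cs_normX_le1 a n : cs_norm a <= 1 -> cs_norm (a ^+ n) <= 1.
Proof. by move=> ha; rewrite (le_trans (cs_normX a n)) // exprn_ile1 ?cs_norm_ge0. Qed.

Lemma cs_normX2 a k : cs_star a = a -> cs_norm (a ^+ (2 ^ k)) = cs_norm a ^+ (2 ^ k).
Proof.
move=> sa; elim: k => [|k IHk]; first by rewrite !expn0 !expr1.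
rewrite expnS mulnC !exprM -IHk -cs_norm_sqr ?expr2 //.
exact: cs_starX.
Qed.

End StarNorm.

Lemma bernoulli_le (R : realDomainType) (d : R) n : 0 <= d -> 1 + d *+ n <= (1 + d) ^+ n.
Proof.
move=> d_ge0; elim: n => [|n IHn]; first by rewrite mulr0n addr0 expr0.
rewrite exprSr mulrSr; apply: le_trans (ler_wpM2r _ IHn); last by lra.
have : 0 <= d *+ n * d by rewrite mulr_ge0 ?mulrn_wge0.
by rewrite mulrDr mulr1 mulrDl mul1r; lra.
Qed.

Lemma le1_of_exp2_le2 (R : archiFieldType) (x : R) :
  0 <= x -> (forall k, x ^+ (2 ^ k) <= 2) -> x <= 1.
Proof.
move=> x_ge0 hx; rewrite leNgt; apply/negP => x_gt1.
set d := x - 1; have d_gt0 : 0 < d by rewrite subr_gt0.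
have [k hk] : exists k : nat, d^-1 < k%:R.
  by exists (Num.Def.archi_bound d^-1); rewrite archi_boundP // invr_ge0 ltW.
have : 1 < d *+ (2 ^ k).
  rewrite -mulr_natr; apply: (@lt_le_trans _ _ (d * k%:R)).
    by move: hk; rewrite -(ltr_pM2l d_gt0) mulfV ?gt_eqF.
  by apply: ler_wpM2l; [exact: ltW | rewrite ler_nat ltnW // ltn_expl].
have := bernoulli_le (2 ^ k) (ltW d_gt0); rewrite [1 + d]addrC subrK.
by have := hx k; lra.
Qed.

Lemma mul_orth_idem_blocks (A : pzRingType) (g h P Q P' Q' : A) :
  g * g = g -> h * h = h -> g * h = 0 -> h * g = 0 ->
  (g * P * g + h * Q * h) * (g * P' * g + h * Q' * h) =
  g * (P * g * P') * g + h * (Q * h * Q') * h.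
Proof.
move=> gg hh gh hg; rewrite mulrDl !mulrDr.
have -> : g * P * g * (h * Q' * h) = 0 by rewrite !mulrA -(mulrA _ g h) gh mulr0 !mul0r.
have -> : h * Q * h * (g * P' * g) = 0 by rewrite !mulrA -(mulrA _ h g) hg mulr0 !mul0r.
by rewrite addr0 add0r !mulrA -(mulrA _ g g) -(mulrA _ h h) gg hh.
Qed.

Section ProjectionBlocks.
Variables (R : realType) (B : cstar_alg R) (e : B).
Hypotheses (e_sa : cs_star e = e) (e_id : e * e = e).

Let f_sa : cs_star (1 - e) = 1 - e.
Proof. by rewrite cs_starB cs_star1 e_sa. Qed.

Let f_id : (1 - e) * (1 - e) = 1 - e.
Proof. by rewrite mulrBl mul1r mulrBr mulr1 e_id subrr subr0. Qed.

Let fe : (1 - e) * e = 0. Proof. by rewrite mulrBl mul1r e_id subrr. Qed.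
Let ef : e * (1 - e) = 0. Proof. by rewrite mulrBr mulr1 e_id subrr. Qed.
Let e_le1 : cs_norm e <= 1. Proof. exact: cs_norm_proj_le1. Qed.
Let f_le1 : cs_norm (1 - e) <= 1. Proof. exact: cs_norm_proj_le1. Qed.

Definition pblock (P Q : B) := (1 - e) * P * (1 - e) + e * Q * e.

Lemma pblockM P Q P' Q' :
  pblock P Q * pblock P' Q' = pblock (P * (1 - e) * P') (Q * e * Q').
Proof. exact: mul_orth_idem_blocks. Qed.

Lemma pblock_star P Q : cs_star (pblock P Q) = pblock (cs_star P) (cs_star Q).
Proof. by rewrite /pblock cs_starD !cs_starM f_sa e_sa !mulrA. Qed.

Lemma pblock11 : pblock 1 1 = 1.
Proof. by rewrite /pblock !mulr1 f_id e_id subrK. Qed.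

Lemma cs_norm_sandwich (x P : B) : cs_norm x <= 1 -> cs_norm (x * P * x) <= cs_norm P.
Proof.
move=> hx; have := cs_norm_ge0 P; have := cs_norm_ge0 x => x_ge0 P_ge0.
have xP : cs_norm (x * P) <= cs_norm P.
  by rewrite (le_trans (cs_normM _ _)) // -[X in _ <= X]mul1r ler_wpM2r.
by rewrite (le_trans (cs_normM _ _)) // -[X in _ <= X]mulr1 ler_pM ?cs_norm_ge0.
Qed.

Lemma cs_norm_pblock P Q : cs_norm (pblock P Q) <= cs_norm P + cs_norm Q.
Proof. by rewrite (le_trans (cs_normD _ _)) // lerD // cs_norm_sandwich. Qed.

(* ||Z||^2 = ||S|| for S = Z* Z, and the powers of S stay block diagonal with
   contractive blocks, so ||S||^(2^k) = ||S^(2^k)|| <= 2 for all k. *)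
Lemma cs_norm_pblock_le1 P Q :
  cs_norm P <= 1 -> cs_norm Q <= 1 -> cs_norm (pblock P Q) <= 1.
Proof.
move=> hP hQ; set S := cs_star (pblock P Q) * pblock P Q.
have S_sa : cs_star S = S by rewrite /S cs_starM cs_starK.
have SE : S = pblock (cs_star P * (1 - e) * P) (cs_star Q * e * Q).
  by rewrite /S pblock_star pblockM.
have SX n : exists P1 Q1,
    [/\ S ^+ n = pblock P1 Q1, cs_norm P1 <= 1 & cs_norm Q1 <= 1].
  elim: n => [|n [P1 [Q1 [SnE hP1 hQ1]]]].
    by exists 1, 1; rewrite expr0 pblock11 cs_norm1_le1.
  exists (P1 * (1 - e) * (cs_star P * (1 - e) * P)), (Q1 * e * (cs_star Q * e * Q)).
  rewrite exprSr SnE SE pblockM; split => //.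
    by do !apply: cs_normM_le1; rewrite ?cs_norm_star.
  by do !apply: cs_normM_le1; rewrite ?cs_norm_star.
have S_le1 : cs_norm S <= 1.
  apply: le1_of_exp2_le2 => [|k]; first exact: cs_norm_ge0.
  have [P1 [Q1 [SkE hP1 hQ1]]] := SX (2 ^ k)%N.
  rewrite -cs_normX2 // SkE (le_trans (cs_norm_pblock _ _)) //; lra.
have : cs_norm (pblock P Q) ^+ 2 <= 1 by rewrite -cs_normC.
by rewrite expr_le1 // cs_norm_ge0.
Qed.

End ProjectionBlocks.

Section PositiveContractions.
Variables (R : realType) (B : cstar_alg R).

Lemma cs_norm_1Bproj_le1 (q : B) (t : R) : cs_star q = q -> q * q = q ->
  0 <= t <= 1 -> cs_norm (1 - t%:C%C *: q) <= 1.
Proof.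
move=> q_sa q_id /andP[t_ge0 t_le1].
have -> : 1 - t%:C%C *: q = pblock q 1 ((1 - t)%:C%C *: 1).
  rewrite /pblock !mulr1 -scalerAr -scalerAl mulr1 q_id.
  rewrite mulrBl mul1r mulrBr mulr1 q_id subrr subr0.
  by rewrite rmorphB rmorph1 scalerBl scale1r addrA subrK.
rewrite cs_norm_pblock_le1 ?cs_norm1_le1 // cs_normZ_real ger0_norm ?subr_ge0 //.
by rewrite -[X in _ <= X]mulr1 ler_pM ?cs_norm1_le1 ?cs_norm_ge0 ?subr_ge0 //; lra.
Qed.

Lemma cs_norm_1Bcorner_le1 (e q : B) (t : R) : cs_star e = e -> e * e = e ->
  cs_star q = q -> q * q = q -> 0 <= t <= 1 ->
  cs_norm (1 - t%:C%C *: (e * q * e)) <= 1.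
Proof.
move=> e_sa e_id q_sa q_id ht.
have -> : 1 - t%:C%C *: (e * q * e) = pblock e 1 (1 - t%:C%C *: q).
  rewrite /pblock mulr1 mulrBl mul1r mulrBr mulr1 e_id subrr subr0.
  by rewrite mulrBr mulr1 mulrBl e_id -scalerAr -scalerAl addrA subrK.
by rewrite cs_norm_pblock_le1 ?cs_norm1_le1 ?cs_norm_1Bproj_le1.
Qed.

End PositiveContractions.

Lemma prim_root_exists (F : numClosedFieldType) n :
  (0 < n)%N -> {z : F | n.-primitive_root z}.
Proof.
move=> n_gt0; apply/sigW.
have [r Dp] := closed_field_poly_normal ('X^n - 1 : {poly F}).
rewrite (monicP _) ?monicXnsubC // scale1r in Dp.
have r_roots : all n.-unity_root r by apply/allP => z; rewrite -root_prod_XsubC -Dp.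
have r_uniq : uniq r.
  by rewrite -separable_prod_XsubC -Dp separable_Xn_sub_1 // pnatr_eq0 -lt0n.
have size_r : (n < (size r).+1)%N by rewrite -(size_prod_XsubC r id) -Dp size_XnsubC.
by have [z _ ?] := hasP (has_prim_root n_gt0 r_roots r_uniq size_r); exists z.
Qed.

Lemma sum_expr_unity_root0 (F : fieldType) (z : F) n :
  z ^+ n = 1 -> z != 1 -> \sum_(k < n) z ^+ k = 0.
Proof.
move=> zn z1; have := subrX1 z n; rewrite zn subrr => /esym/eqP.
by rewrite mulf_eq0 subr_eq0 (negbTE z1) => /eqP.
Qed.

(* With w a primitive (M+1)-th root of unity, the weights w^(kM) kill every
   power x^i, i <= M, of the binomial expansion of (1 + w^k x)^M except x^1. *)
Lemma sum_prim_root_coef (F : fieldType) (w : F) M : (0 < M)%N ->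
  (M.+1).-primitive_root w -> forall i, (i <= M)%N ->
  \sum_(k < M.+1) (w ^+ k) ^+ M * (w ^+ k) ^+ i = if i == 1%N then (M.+1)%:R else 0.
Proof.
move=> M_gt0 pw i le_iM.
under eq_bigr => k _ do rewrite -exprD -!exprM mulnC exprM.
case: eqP => [->|i_neq1].
  have -> : w ^+ (M + 1) = 1 by apply/eqP; rewrite -(prim_order_dvd pw) addn1.
  by rewrite (eq_bigr (fun _ => 1)) ?sumr_const ?card_ord // => k _; rewrite expr1n.
apply: sum_expr_unity_root0.
  by rewrite -exprM mulnC exprM (prim_expr_order pw) expr1n.
rewrite -(prim_order_dvd pw).
case: i le_iM i_neq1 => [|[|j]] le_iM i_neq1 //; first by rewrite addn0 gtnNdvd.
by rewrite -addSnnS dvdn_addr // gtnNdvd // ltnS ltnW.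
Qed.

Lemma normcX (R : realType) (z : R[i]) n : Normc.normc (z ^+ n) = Normc.normc z ^+ n.
Proof.
elim: n => [|n IHn]; first by rewrite !expr0 Normc.normc1.
by rewrite !exprS Normc.normcM IHn.
Qed.

Lemma normc_half (R : realType) : Normc.normc (2^-1 : R[i]) = 2^-1.
Proof. by rewrite Normc.normcV -[2 : R[i]]/(1 *+ 2) normcMn Normc.normc1. Qed.

Section SelfAdjointVanishing.
Variables (R : realType) (B : cstar_alg R) (c : B).
Hypothesis c_sa : cs_star c = c.
Hypothesis c_contr : forall t : R, -1 <= t <= 1 -> cs_norm (1 + t%:C%C *: c) <= 1.
Local Notation ev := (horner_alg c).

Let cs_norm_alg (k : R[i]) (y : B) : cs_norm (k%:A * y) = Normc.normc k * cs_norm y.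
Proof. by rewrite mulr_algl cs_normZ. Qed.

Let ev_lin (k : R[i]) : ev (1 + k%:P * 'X) = 1 + k *: c.
Proof. by rewrite rmorphD rmorph1 rmorphM /= horner_algC horner_algX mulr_algl. Qed.

Let ev_lin_contr (t : R) : -1 <= t <= 1 -> cs_norm (ev (1 + t%:C%C%:P * 'X)) <= 1.
Proof. by rewrite ev_lin; apply: c_contr. Qed.

Let polyC_half_eq (p q : {poly R[i]}) : 2%:P * p = q -> p = (2^-1)%:P * q.
Proof. by move=> <-; rewrite mulrA -polyCM mulVf ?mul1r // pnatr_eq0. Qed.

Let half_sum_le1 (a b : B) : cs_norm a <= 1 -> cs_norm b <= 1 ->
  cs_norm ((2^-1 : R[i])%:A * (a + b)) <= 1.
Proof.
move=> ha hb; rewrite cs_norm_alg normc_half.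
have := cs_normD a b; have := cs_norm_ge0 (a + b); lra.
Qed.

(* 1 + s X^2 = ((1 + tX)^2 + (1 - tX)^2) / 2 with t = sqrt s if s >= 0,
   and = (1 + tX)(1 - tX) with t = sqrt (-s) otherwise. *)
Lemma cs_norm_1Dsqr_le1 (s : R) : -1 <= s <= 1 ->
  cs_norm (ev (1 + s%:C%C%:P * 'X ^+ 2)) <= 1.
Proof.
move=> /andP[s_ge s_le]; have [s_ge0|s_lt0] := leP 0 s.
  set t := Num.sqrt s.
  have tt : s%:C%C = t%:C%C * t%:C%C by rewrite -rmorphM -expr2 sqr_sqrtr.
  have t_ge0 : 0 <= t by apply: sqrtr_ge0.
  have t_le1 : t <= 1 by rewrite -sqrtr1 ler_sqrt.
  have -> : 1 + s%:C%C%:P * 'X ^+ 2 = (2^-1 : R[i])%:P *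
      ((1 + t%:C%C%:P * 'X) ^+ 2 + (1 + (- t)%:C%C%:P * 'X) ^+ 2).
    by apply: polyC_half_eq; rewrite tt rmorphN /= !polyCN !polyCM; ring.
  rewrite rmorphM /= horner_algC rmorphD !rmorphXn.
  by apply: half_sum_le1; apply: cs_normX_le1; apply: ev_lin_contr; lra.
set t := Num.sqrt (- s).
have tt : s%:C%C = - (t%:C%C * t%:C%C).
  by rewrite -rmorphM -expr2 sqr_sqrtr ?oppr_ge0 1?ltW // -rmorphN opprK.
have t_ge0 : 0 <= t by apply: sqrtr_ge0.
have t_le1 : t <= 1 by rewrite -sqrtr1 ler_sqrt //; lra.
have -> : 1 + s%:C%C%:P * 'X ^+ 2 =
    (1 + t%:C%C%:P * 'X) * (1 + (- t)%:C%C%:P * 'X).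
  by rewrite tt !rmorphN /= ?polyCN !polyCM; ring.
by rewrite rmorphM cs_normM_le1 // ev_lin_contr //; lra.
Qed.

(* (1 + l^* c)(1 + l c) = ((1 + 2 Re l c)^2 + (1 + (2|l|^2 - 4 (Re l)^2) c^2)) / 2,
   and both coefficients lie in [-1, 1] when |l| = 1/2. *)
Lemma cs_norm_1DZ_le1 (a b : R) : a ^+ 2 + b ^+ 2 = 4^-1 ->
  cs_norm (1 + (a +i* b)%C *: c) <= 1.
Proof.
move=> hab; set l := (a +i* b)%C; set m := conjc l.
have lm : l + m = (2 * a)%:C%C.
  by apply/eqP; rewrite eq_complex /=; apply/andP; split; apply/eqP; ring.
have ml : m * l = (a ^+ 2 + b ^+ 2)%:C%C.
  by apply/eqP; rewrite eq_complex /=; apply/andP; split; apply/eqP; ring.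
have sg : 2 * (m * l) - (l + m) ^+ 2 = (2 * (a ^+ 2 + b ^+ 2) - (2 * a) ^+ 2)%:C%C.
  by rewrite lm ml !rmorphB !rmorphM ?rmorphXn ?rmorph_nat.
have E : cs_star (1 + l *: c) * (1 + l *: c) = ev ((2^-1 : R[i])%:P *
    ((1 + (l + m)%:P * 'X) ^+ 2 + (1 + (2 * (m * l) - (l + m) ^+ 2)%:P * 'X ^+ 2))).
  rewrite cs_starD cs_star1 cs_starZ c_sa -!ev_lin -rmorphM; congr ev.
  by apply: polyC_half_eq; rewrite ?polyCD ?polyCB ?polyCN ?polyCM ?polyCX; ring.
have : cs_norm (1 + l *: c) ^+ 2 <= 1.
  rewrite -cs_normC E rmorphM /= horner_algC rmorphD /= rmorphXn.
  apply: half_sum_le1; last by rewrite sg cs_norm_1Dsqr_le1 //; nra.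
  by rewrite cs_normX_le1 // lm ev_lin_contr //; nra.
by rewrite expr_le1 // cs_norm_ge0.
Qed.

Lemma sum_prim_root_expansion (w : R[i]) M : (0 < M)%N -> (M.+1).-primitive_root w ->
  \sum_(k < M.+1) (w ^+ k) ^+ M *: (1 + (2^-1 * w ^+ k) *: c) ^+ M
  = (2^-1 * (M.+1)%:R) *+ M *: c.
Proof.
move=> M_gt0 pw.
under eq_bigr => k _.
  rewrite addrC exprD1n scaler_sumr.
  under eq_bigr => i _ do rewrite exprZn scalerMnl scalerA mulrnAr.
  over.
rewrite exchange_big /=.
under eq_bigr => i _.
  rewrite -scaler_suml sumrMnl.
  under eq_bigr => k _ do rewrite exprMn mulrCA.
  rewrite -mulr_sumr (sum_prim_root_coef M_gt0 pw (ltnSE (ltn_ord i))).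
  over.
have lt1M : (1 < M.+1)%N by rewrite ltnS.
rewrite (bigD1 (Ordinal lt1M)) //= big1 ?addr0 ?expr1 ?bin1 // => i ne_i1.
have -> : (i == 1%N :> nat) = false.
  by apply: contraNF ne_i1 => /eqP hi; apply/eqP; apply: val_inj.
by rewrite mulr0 mul0rn scale0r.
Qed.

Lemma natr_mul_cs_norm_le2 M : (0 < M)%N -> M%:R * cs_norm c <= 2.
Proof.
move=> M_gt0.
have [w pw] := @prim_root_exists R[i] _ (ltn0Sn M).
have nw : Normc.normc w = 1.
  have : Normc.normc w ^+ M.+1 = 1 by rewrite -normcX (prim_expr_order pw) Normc.normc1.
  move/eqP; rewrite pexpr_eq1 // => [/eqP //|].
  by case: w {pw} => ? ?; rewrite /Normc.normc sqrtr_ge0.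
have hw k : cs_norm (1 + (2^-1 * w ^+ k) *: c) <= 1.
  have : Normc.normc (2^-1 * w ^+ k) = 2^-1.
    by rewrite Normc.normcM normcX nw expr1n mulr1 normc_half.
  case: (2^-1 * w ^+ k) => a b; rewrite /Normc.normc => hs; apply: cs_norm_1DZ_le1.
  have h0 : 0 <= a ^+ 2 + b ^+ 2 by rewrite addr_ge0 // sqr_ge0.
  by rewrite -(sqr_sqrtr h0) hs; field.
have := cs_norm_sum (index_enum 'I_M.+1) xpredT
  (fun k : 'I_M.+1 => (w ^+ k) ^+ M *: (1 + (2^-1 * w ^+ k) *: c) ^+ M).
rewrite sum_prim_root_expansion // cs_normZ normcMn Normc.normcM normc_half.
rewrite normcMn Normc.normc1 => bnd.
have {}bnd : ((2^-1 * (M.+1)%:R) *+ M) * cs_norm c <= (M.+1)%:R.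
  apply: (le_trans bnd (le_trans _ (_ : \sum_(k < M.+1) 1 <= _))).
    apply: ler_sum => k _.
    by rewrite cs_normZ -exprM normcX nw expr1n mul1r cs_normX_le1.
  by rewrite sumr_const card_ord.
have M_ge0 : (0 : R) <= M%:R by rewrite ler0n.
have MS : (M.+1)%:R = M%:R + 1 :> R by rewrite mulrSr.
have := cs_norm_ge0 c; move: bnd; rewrite -[_ *+ M]mulr_natr MS; nra.
Qed.

Lemma selfadjoint_contr_eq0 : c = 0.
Proof.
apply: cs_norm_eq0; apply: le_anti; rewrite cs_norm_ge0 andbT leNgt.
apply/negP => c_gt0.
have [M hM] : exists M : nat, 2 / cs_norm c < M%:R.
  by exists (Num.Def.archi_bound (2 / cs_norm c)); rewrite archi_boundP // divr_ge0 // ltW.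
have := natr_mul_cs_norm_le2 (ltn0Sn M); rewrite [(M.+1)%:R]mulrSr mulrDl mul1r.
have : 2 < M%:R * cs_norm c by rewrite -ltr_pdivrMr.
lra.
Qed.

End SelfAdjointVanishing.

Section PositiveCorners.
Variables (R : realType) (B : cstar_alg R).

Lemma proj_corner_eq0 (e q : B) : cs_star e = e -> cs_star q = q -> q * q = q ->
  e * q * e = 0 -> q * e = 0.
Proof.
move=> e_sa q_sa q_id eqe0; apply: cs_norm_eq0; apply/eqP.
rewrite -(@sqrf_eq0 _ (cs_norm _)) -cs_normC cs_starM e_sa q_sa mulrA.
by rewrite -(mulrA e q q) q_id eqe0 cs_norm0.
Qed.

Variables (I : finType) (e : B) (q : I -> B).
Hypotheses (e_sa : cs_star e = e) (e_id : e * e = e).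
Hypothesis q_proj : forall z, cs_star (q z) = q z /\ q z * q z = q z.

(* The corners e q_z e behave like positive elements: a vanishing sum of them
   makes c = e q_y e / |I| satisfy || 1 + t c || <= 1 on [-1, 1], hence c = 0. *)
Lemma corner_sum_eq0 : \sum_z e * q z * e = 0 -> forall y, e * q y * e = 0.
Proof.
move=> sum0 y; have [qy_sa qy_id] := q_proj y.
set K : R := #|I|%:R.
have K_ge1 : 1 <= K by rewrite ler1n; apply/card_gt0P; exists y.
have K_gt0 : 0 < K by lra.
have : K^-1%:C%C *: (e * q y * e) = 0.
  apply: selfadjoint_contr_eq0 => [|t /andP[t_ge t_le]].
    by rewrite cs_starZ conjc_real !cs_starM e_sa qy_sa mulrA.
  rewrite scalerA -rmorphM; have [t_le0|t_gt0] := leP t 0.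
    rewrite -[t / K]opprK rmorphN scaleNr cs_norm_1Bcorner_le1 // -mulNr.
    by rewrite divr_ge0 ?ler_pdivrMr ?mul1r //=; lra.
  pose q' z := if z == y then 0 else q z.
  have q'_proj z : cs_star (q' z) = q' z /\ q' z * q' z = q' z.
    by rewrite /q'; case: eqP => _; rewrite ?cs_star0 ?mulr0.
  have sum_q' : \sum_z e * q' z * e = - (e * q y * e).
    move/eqP: sum0; rewrite (bigD1 y) //= addrC addr_eq0 => /eqP <-.
    rewrite (bigD1 y) //= /q' eqxx mulr0 mul0r add0r.
    by apply: eq_bigr => z /negbTE ->.
  have -> : 1 + (t / K)%:C%C *: (e * q y * e) =
      K^-1%:C%C *: \sum_z (1 - t%:C%C *: (e * q' z * e)).
    have KC : K%:C%C = #|I|%:R by rewrite rmorph_nat.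
    rewrite sumrB -scaler_sumr sum_q' sumr_const -scaler_nat -KC.
    rewrite scalerBr !scalerA -!rmorphM mulVf ?gt_eqF // scale1r.
    by rewrite scalerN opprK mulrC.
  rewrite cs_normZ_real ger0_norm ?invr_ge0 ?(ltW K_gt0) // ler_pdivrMl // mulr1.
  apply: le_trans (cs_norm_sum _ _ _) (le_trans _ (_ : \sum_(z : I) 1 <= K)).
    apply: ler_sum => z _.
    by case: (q'_proj z) => ? ?; rewrite cs_norm_1Bcorner_le1 // ltW //=.
  by rewrite sumr_const.
move/(congr1 (fun v => K%:C%C *: v)).
by rewrite scalerA -rmorphM mulfV ?gt_eqF // scale1r scaler0.
Qed.

End PositiveCorners.

Lemma proj_partition_orth (R : realType) (B : cstar_alg R) (I : finType) (p : I -> B) :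
  (forall i, cs_star (p i) = p i /\ p i * p i = p i) -> \sum_i p i = 1 ->
  forall x y, x != y -> p x * p y = 0.
Proof.
move=> p_proj p_sum x y ne_xy; have [px_sa px_id] := p_proj x.
have [py_sa py_id] := p_proj y.
pose q z := if z == x then 0 else p z.
have q_proj z : cs_star (q z) = q z /\ q z * q z = q z.
  by rewrite /q; case: eqP => _; rewrite ?cs_star0 ?mulr0.
have : \sum_z p x * q z * p x = 0.
  have : \sum_z p x * p z * p x = p x.
    by rewrite -mulr_suml -mulr_sumr p_sum mulr1 px_id.
  rewrite (bigD1 x) //= px_id px_id => /eqP; rewrite -subr_eq0 [p x + _]addrC addrK.
  move=> /eqP sum0; apply: etrans sum0.
  rewrite (bigD1 x) //= /q eqxx mulr0 mul0r add0r.
  by apply: eq_bigr => z /negbTE ->.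
move/(corner_sum_eq0 px_sa px_id q_proj)/(_ y).
rewrite /q eq_sym (negbTE ne_xy) => /(proj_corner_eq0 px_sa py_sa py_id) pyx0.
by have := congr1 (@cs_star R B) pyx0; rewrite cs_starM px_sa py_sa cs_star0.
Qed.

Section Translations.
Variable X : finZmodType.

Lemma translations_shift (s : {perm X}) :
  s \in translations X -> exists x, forall j, s j = j + x.
Proof. by rewrite inE => /existsP [x /forallP sx]; exists x => j; apply/eqP. Qed.

Lemma YptE (s : Ypt X) j : val s j = j + val s 0.
Proof. by have [x sx] := translations_shift (valP s); rewrite !sx add0r. Qed.

Lemma Ypt_inj_at0 (s t : Ypt X) : val s 0 = val t 0 -> s = t.
Proof. by move=> st0; apply/val_inj/permP => j; rewrite YptE st0 -YptE. Qed.

Definition translation (x : X) : {perm X} := perm (addIr x).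

Lemma translationE x j : translation x j = j + x.
Proof. exact: permE. Qed.

Lemma translation_in x : translation x \in translations X.
Proof. by rewrite inE; apply/existsP; exists x; apply/forallP => j; rewrite translationE. Qed.

Definition Ypt_of (x : X) : Ypt X := exist _ (translation x) (translation_in x).

Lemma Ypt_ofE x j : val (Ypt_of x) j = j + x.
Proof. exact: permE. Qed.

Lemma translations_group : group_set (translations X).
Proof.
apply/group_setP; split.
  by rewrite inE; apply/existsP; exists 0; apply/forallP => j; rewrite perm1 addr0.
move=> s t /translations_shift [x sx] /translations_shift [y ty]; rewrite inE.
by apply/existsP; exists (x + y); apply/forallP => j; rewrite permM sx ty addrA.
Qed.

Variable R : realType.

Lemma coordC_magic : magic_CY R X.
Proof.
have sum_delta (a : X) : \sum_(i : X) (if i == a then 1 else 0 : R[i]) = 1.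
  by rewrite -big_mkcond big_pred1_eq.
split; [|split] => [i j s|i s|j s]; rewrite /coordC.
- by case: ifP => _; rewrite ?rmorph0 ?rmorph1 ?mulr0 ?mulr1.
- apply: etrans (sum_delta ((val s)^-1 i)%g); apply: eq_bigr => j _.
  suff -> : (i == val s j) = (j == (val s)^-1 i)%g by [].
  by apply/eqP/eqP => [->|->]; rewrite ?permK ?permKV.
- exact: sum_delta.
Qed.

Lemma coordC_diff (i j k l : X) : i - j = k - l ->
  forall s : Ypt X, coordC R i j s = coordC R k l s.
Proof.
move=> ij_kl s; rewrite /coordC (YptE s j) (YptE s l).
have shiftE (a b : X) : (a == b + val s 0) = (a - b == val s 0).
  by rewrite subr_eq addrC.
by rewrite !shiftE ij_kl.
Qed.

End Translations.

Section UniversalProperty.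
Variables (X : finZmodType) (R : realType) (B : cstar_alg R) (u : X -> X -> B).
Hypotheses (u_magic : magic u) (u_diff : diff_relations u).

Definition Ypt_proj (s : Ypt X) : B := u (val s 0) 0.

Definition CY_rep (f : Ypt X -> R[i]) : B := \sum_s f s *: Ypt_proj s.

Lemma Ypt_projM s t : Ypt_proj s * Ypt_proj t = if s == t then Ypt_proj s else 0.
Proof.
have [u_proj [_ u_col]] := u_magic.
case: eqP => [->|/eqP ne_st]; first by case: (u_proj (val t 0) 0).
apply: (proj_partition_orth (p := fun i => u i 0)) => //.
by apply: contra ne_st => /eqP /Ypt_inj_at0 ->.
Qed.

Lemma CY_rep_coord i j : CY_rep (coordC R i j) = u i j.
Proof.
rewrite /CY_rep (bigD1 (Ypt_of (i - j))) //= big1 ?addr0.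
  rewrite /coordC Ypt_ofE addrC subrK eqxx scale1r /Ypt_proj Ypt_ofE add0r.
  by apply: u_diff; rewrite subr0.
move=> s ne_s; rewrite /coordC; case: eqP => [ij|_]; last by rewrite scale0r.
case/eqP: ne_s; apply: Ypt_inj_at0.
by rewrite Ypt_ofE add0r ij (YptE s j) [j + _]addrC addrK.
Qed.

Lemma CY_rep_hom : star_hom_CY CY_rep.
Proof.
have [u_proj [_ u_col]] := u_magic.
split => [f g|a f|f g||f]; rewrite /CY_rep.
- by rewrite -big_split; apply: eq_bigr => s _; rewrite scalerDl.
- by rewrite scaler_sumr; apply: eq_bigr => s _; rewrite scalerA.
- rewrite mulr_suml; apply: eq_bigr => s _; rewrite mulr_sumr (bigD1 s) //= big1.
    by rewrite addr0 -scalerAl -scalerAr scalerA Ypt_projM eqxx.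
  by move=> t ne_ts; rewrite -scalerAl -scalerAr Ypt_projM eq_sym (negbTE ne_ts) !scaler0.
- apply: etrans (u_col 0); rewrite (reindex (fun s : Ypt X => val s 0)).
    by apply: eq_bigr => s _; rewrite scale1r.
  by exists (@Ypt_of X) => [s _|x _]; [apply: Ypt_inj_at0|]; rewrite Ypt_ofE add0r.
- rewrite cs_star_sum; apply: eq_bigr => s _.
  by rewrite cs_starZ (proj1 (u_proj _ _)).
Qed.

Lemma CY_rep_unique psi : star_hom_CY psi ->
  (forall i j, psi (coordC R i j) = u i j) -> forall f, psi f = CY_rep f.
Proof.
move=> [psiD psiZ _ _ _] psi_coord f.
have psi0 : psi (fun _ => 0) = 0.
  have := psiZ 0 (fun _ => 0); rewrite scale0r => <-; congr psi.
  by apply: functional_extensionality => s; rewrite mul0r.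
have psi_sum (r : seq (Ypt X)) (g : Ypt X -> Ypt X -> R[i]) :
    psi (fun t => \sum_(s <- r) g s t) = \sum_(s <- r) psi (g s).
  elim: r => [|s r IHr].
    rewrite big_nil -psi0; congr psi.
    by apply: functional_extensionality => t; rewrite big_nil.
  rewrite big_cons -IHr -psiD; congr psi.
  by apply: functional_extensionality => t; rewrite big_cons.
have fE : f = fun t => \sum_s f s * coordC R (val s 0) 0 t.
  apply: functional_extensionality => t.
  rewrite (bigD1 t) //= /coordC eqxx mulr1 big1 ?addr0 // => s ne_st.
  case: eqP => [/Ypt_inj_at0 st|_]; last by rewrite mulr0.
  by rewrite st eqxx in ne_st.
rewrite {1}fE psi_sum; apply: eq_bigr => s _.
by rewrite psiZ psi_coord.
Qed.

End UniversalProperty.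

Theorem lemma3p5 (X : finZmodType) (R : realType) :
  (* Y, the set of translations of X, is a subgroup of S_X *)
  group_set (translations X) /\
  (* the coordinates u_ij(sigma) = delta_{i sigma(j)} on Y form a magic matrix
     satisfying the relations *)
  magic_CY R X /\
  (forall i j k l : X, i - j = k - l ->
     forall s : Ypt X, coordC R i j s = coordC R k l s) /\
  (* universal property: C(Y) is the universal C*-algebra generated by a magic
     matrix subject to u_ij = u_kl for i - j = k - l, i.e. the quotient of
     C(S_X^+) by these relations *)
  (forall (B : cstar_alg R) (u : X -> X -> B),
     magic u -> diff_relations u ->
     exists phi : (Ypt X -> complex R) -> B,
       [/\ star_hom_CY phi,
           forall i j, phi (coordC R i j) = u i j
         & forall psi : (Ypt X -> complex R) -> B,
             star_hom_CY psi -> (forall i j, psi (coordC R i j) = u i j) ->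
             forall f, psi f = phi f]).
Proof.
split; first exact: translations_group.
split; first exact: coordC_magic.
split; first exact: coordC_diff.
move=> B u u_magic u_diff; exists (CY_rep u); split.
- exact: CY_rep_hom.
- exact: CY_rep_coord.
- exact: CY_rep_unique.
Qed.
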